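(* Let $G$ be a BTB graph and $d\ge1$. Sending a circuit configuration $(V,\mu)$ on $G$ with vectors in $\mathbb C^{d+1}$ to the map $w\mapsto[V(w)]\in\mathbb{CP}^d$ induces a one-to-one correspondence between gauge-equivalence classes of circuit configurations on $G$ and TCD maps on $G$ into $\mathbb{CP}^d$.
   Context: A BTB graph is a planar bipartite graph (black $B$, white $W$, edges $E$) embedded in a disk or cactus with every black vertex of degree $3$. A TCD map is $T:W\to\mathbb{CP}^d$ such that for each black vertex the images of its three white neighbours are pairwise distinct and lie on a common line. A vector-relation configuration (VRC) on $G$ is a pair consisting of nonzero vectors $V(w)\in\mathbb C^{d+1}$ for $w\in W$ and, for each black vertex $b$, a linear relation $\sum_{bw\in E}\mu(bw)V(w)=0$ with edge weights $\mu(bw)\in\mathbb C$. It is a circuit configuration if for every $b$ the vectors $\{V(w):bw\in E\}$ form a circuit (a minimal linearly dependent set). A gauge transformation, given by $\lambda:B\sqcup W\to\mathbb C^*$, sends $V(w)\mapsto\lambda(w)V(w)$, the relation at $b$ to $\lambda(b)$ times it, and $\mu(bw)\mapsto\lambda(b)\lambda(w)^{-1}\mu(bw)$. *)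

From HB Require Import structures.
From mathcomp Require Import all_boot all_order all_algebra.
From mathcomp Require Import complex.
From mathcomp Require Import reals.
Set Implicit Arguments. Unset Strict Implicit. Unset Printing Implicit Defensive.
Import Order.TTheory GRing.Theory Num.Theory.
Local Open Scope ring_scope.

Section Defs.
Variables (K : fieldType) (B W : finType) (E : B -> W -> bool) (d : nat).

Definition black_deg3 : Prop := forall b : B, #|[set w | E b w]| = 3%N.

(* The point [v] of the projective space P(K^(d+1)), represented canonically
   as the row space <<v>> (a square matrix) of the nonzero row vector v. *)
Definition proj_pt (v : 'rV[K]_(d.+1)) : 'M[K]_(d.+1) := <<v>>%MS.

Definition is_proj_pt (P : 'M[K]_(d.+1)) : Prop :=
  \rank P = 1%N /\ <<P>>%MS = P.

Definition is_proj_line (L : 'M[K]_(d.+1)) : Prop := \rank L = 2%N.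

Definition TCD_map (T : W -> 'M[K]_(d.+1)) : Prop :=
  (forall w, is_proj_pt (T w)) /\
  (forall b : B,
     (forall w1 w2, E b w1 -> E b w2 -> w1 != w2 -> T w1 <> T w2) /\
     (exists L, is_proj_line L /\ forall w, E b w -> (T w <= L)%MS)).

Definition lin_dep (V : W -> 'rV[K]_(d.+1)) (S : {set W}) : Prop :=
  exists c : W -> K, (exists2 w, w \in S & c w != 0) /\
    \sum_(w in S) c w *: V w = 0.

Definition is_circuit (V : W -> 'rV[K]_(d.+1)) (S : {set W}) : Prop :=
  lin_dep V S /\ forall S' : {set W}, S' \proper S -> ~ lin_dep V S'.

Definition nbhd (b : B) : {set W} := [set w | E b w].

Definition VRC (V : W -> 'rV[K]_(d.+1)) (mu : B -> W -> K) : Prop :=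
  (forall w, V w != 0) /\
  (forall b, (exists2 w, E b w & mu b w != 0) /\
             \sum_(w in nbhd b) mu b w *: V w = 0).

Definition circuit_config (V : W -> 'rV[K]_(d.+1)) (mu : B -> W -> K) : Prop :=
  VRC V mu /\ forall b, is_circuit V (nbhd b).

Definition gauge_equiv (V : W -> 'rV[K]_(d.+1)) (mu : B -> W -> K)
    (V' : W -> 'rV[K]_(d.+1)) (mu' : B -> W -> K) : Prop :=
  exists (lB : B -> K) (lW : W -> K),
    (forall b, lB b != 0) /\ (forall w, lW w != 0) /\
    (forall w, V' w = lW w *: V w) /\
    (forall b w, E b w -> mu' b w = lB b * (lW w)^-1 * mu b w).

End Defs.

From HB Require Import structures.
From mathcomp Require Import all_boot all_order all_algebra.
From mathcomp Require Import complex.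
From mathcomp Require Import reals.
Set Implicit Arguments. Unset Strict Implicit. Unset Printing Implicit Defensive.
Import GRing.Theory.
Local Open Scope ring_scope.

(* Three nonzero vectors form a circuit exactly when they are pairwise
   independent but dependent, i.e. when they span a plane in which their
   three projective points are distinct: this is the TCD condition at a black
   vertex of degree 3.  A linear relation on a circuit is unique up to a
   scalar, so two circuit configurations with the same points differ by a
   rescaling of the vectors (the gauge on W) and of the relations (the gauge
   on B).  Conversely, representatives of three points on a projective line
   lie in a 2-dimensional space and hence satisfy a relation. *)

Lemma cards3_set3 (T : finType) (S : {set T}) : #|S| = 3%N ->
  exists x y z, [/\ x != y, x != z, y != z & S = [set x; y; z]].
Proof.
move=> S3; have [x xS] : exists x, x \in S by apply/card_gt0P; rewrite S3.
move: S3; rewrite (cardsD1 x) xS => -[] /eqP /cards2P [y [z [yz Sx]]].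
have /setD1P [yx _] : y \in S :\ x by rewrite Sx !inE eqxx.
have /setD1P [zx _] : z \in S :\ x by rewrite Sx !inE eqxx orbT.
exists x, y, z; split; [by rewrite eq_sym.. | by [] |].
by rewrite -{1}(setD1K xS) Sx setUA.
Qed.

Lemma big_set2 (M : nmodType) (T : finType) (F : T -> M) x y : x != y ->
  \sum_(w in [set x; y]) F w = F x + F y.
Proof. by move=> xy; rewrite big_setU1 ?inE //= big_set1. Qed.

Lemma big_set3 (M : nmodType) (T : finType) (F : T -> M) x y z :
  x != y -> x != z -> y != z -> \sum_(w in [set x; y; z]) F w = F x + F y + F z.
Proof.
move=> xy xz yz; rewrite setUC big_setU1 ?big_set2 ?inE 1?negb_or //=.
  exact: addrC.
by rewrite ![z == _]eq_sym xz.
Qed.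

Section Points.
Variables (K : fieldType) (d : nat).
Implicit Types (u v x : 'rV[K]_d.+1) (L : 'M[K]_d.+1).

Lemma proj_pt_scale k v : k != 0 -> proj_pt (k *: v) = proj_pt v.
Proof. by move=> k0; apply/eq_genmx/eqmx_scale. Qed.

Lemma proj_pt_eq_scale u v : proj_pt u = proj_pt v -> exists k, u = k *: v.
Proof. by move/genmxP => /andP[/sub_rVP]. Qed.

Lemma proj_pt_is_proj_pt v : v != 0 -> is_proj_pt (proj_pt v).
Proof. by move=> v0; split; [rewrite genmxE rank_rV v0 | exact: genmx_id]. Qed.

Lemma is_proj_pt_nz_row L : is_proj_pt L -> nz_row L != 0 /\ proj_pt (nz_row L) = L.
Proof.
move=> [L1 genL]; have nzL : nz_row L != 0.
  by rewrite nz_row_eq0; apply: contra_eqN L1 => /eqP ->; rewrite mxrank0.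
split=> //; rewrite /proj_pt -{2}genL; apply/genmxP.
by rewrite -(mxrank_leqif_eq (nz_row_sub _)).2 rank_rV nzL L1.
Qed.

Definition free2 u v := forall a b : K, a *: u + b *: v = 0 -> a = 0 /\ b = 0.

Lemma free2_neq0 u v : free2 u v -> u != 0 /\ v != 0.
Proof.
move=> uv; split; apply/eqP => uv0.
  have [] := uv 1 0; first by rewrite uv0 scaler0 scale0r addr0.
  by move/eqP; rewrite oner_eq0.
have [] := uv 0 1; first by rewrite uv0 scaler0 scale0r addr0.
by move=> _ /eqP; rewrite oner_eq0.
Qed.

Lemma free2E u v : u != 0 -> v != 0 -> free2 u v <-> proj_pt u <> proj_pt v.
Proof.
move=> u0 v0; split=> [uv /proj_pt_eq_scale [k ukv] | uv a b abuv].
  have [] := uv 1 (- k); first by rewrite ukv scale1r scaleNr subrr.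
  by move/eqP; rewrite oner_eq0.
have [a0 | a0] := eqVneq a 0.
  move: abuv; rewrite a0 scale0r add0r => /eqP.
  by rewrite scaler_eq0 (negbTE v0) orbF => /eqP.
have ukv : u = (- (b / a)) *: v.
  have : a *: u = - (b *: v) by apply/eqP; rewrite -subr_eq0 opprK abuv.
  move/(congr1 (fun w => a^-1 *: w)); rewrite scalerA mulVf // scale1r => ->.
  by rewrite scalerN scalerA mulrC scaleNr.
have k0 : - (b / a) != 0 by apply: contraNneq u0 => k0; rewrite ukv k0 scale0r.
by case: uv; rewrite ukv proj_pt_scale.
Qed.

Lemma rank_adds_free2 u v : free2 u v -> \rank (u + v)%MS = 2%N.
Proof.
move=> uv; have [u0 v0] := free2_neq0 uv.
have cap0 : (u :&: v <= (0 : 'M_d.+1))%MS.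
  apply/rV_subP => x; rewrite sub_capmx => /andP[/sub_rVP [a xa] /sub_rVP [b xb]].
  have [a0 _] : a = 0 /\ - b = 0 by apply: uv; rewrite -xa scaleNr -xb subrr.
  by rewrite xa a0 scale0r sub0mx.
have := (mxrank_adds_leqif u v).2; rewrite cap0 => /eqP ->.
by rewrite !rank_rV u0 v0.
Qed.

Lemma free2_span L u v x : \rank L = 2%N -> free2 u v ->
  (u <= L)%MS -> (v <= L)%MS -> (x <= L)%MS -> exists a b, x = a *: u + b *: v.
Proof.
move=> L2 uv uL vL xL.
have uvL : (u + v <= L)%MS by rewrite addsmx_sub uL vL.
have /andP[_ Luv] : (u + v == L)%MS.
  by rewrite -(mxrank_leqif_eq uvL).2 rank_adds_free2 // L2.
have /sub_addsmxP [[p q] /= ->] := submx_trans xL Luv.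
have /sub_rVP [a ->] := submxMl p u; have /sub_rVP [b ->] := submxMl q v.
by exists a, b.
Qed.

Lemma rel3_sub_adds a b c u v x : c != 0 ->
  a *: u + b *: v + c *: x = 0 -> (x <= u + v)%MS.
Proof.
move=> c0 /eqP; rewrite addr_eq0 => /eqP cx.
have -> : x = - c^-1 *: (a *: u + b *: v).
  by rewrite scaleNr -scalerN cx opprK scalerA mulVf // scale1r.
by apply/scalemx_sub/addmx_sub_adds; apply: scalemx_sub.
Qed.

End Points.

Section Families.
Variables (K : fieldType) (W : finType) (d : nat) (V : W -> 'rV[K]_d.+1).
Implicit Types (S : {set W}) (c : W -> K).

Lemma lin_dep_subset S1 S2 : S1 \subset S2 -> lin_dep V S1 -> lin_dep V S2.
Proof.
move=> S12 [c [[w wS1 cw] rel]].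
exists (fun u => if u \in S1 then c u else 0); split.
  by exists w; rewrite ?wS1 ?(subsetP S12).
rewrite -[RHS]rel [LHS]big_mkcond [RHS]big_mkcond; apply: eq_bigr => u _.
by case: (boolP (u \in S1)) => [/(subsetP S12) -> | _]; rewrite ?scale0r ?if_same.
Qed.

Lemma free2_not_lin_dep p q : p != q -> free2 (V p) (V q) -> ~ lin_dep V [set p; q].
Proof.
move=> pq fpq [c [[w wpq cw] rel]]; rewrite big_set2 // in rel.
have [cp cq] := fpq _ _ rel.
by move: wpq cw; rewrite !inE => /orP[] /eqP ->; rewrite ?cp ?cq eqxx.
Qed.

Lemma lin_dep_setD1 S c w : w \in S -> c w = 0 ->
  (exists2 u, u \in S & c u != 0) -> \sum_(u in S) c u *: V u = 0 ->
  lin_dep V (S :\ w).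
Proof.
move=> wS cw0 [u uS cu] rel; exists c; split.
  by exists u; rewrite // !inE uS andbT; apply: contraNneq cu => ->; rewrite cw0.
by rewrite -[RHS]rel (big_setD1 _ wS) /= cw0 scale0r add0r.
Qed.

Lemma circuit_coef_neq0 S c w : is_circuit V S ->
  (exists2 u, u \in S & c u != 0) -> \sum_(u in S) c u *: V u = 0 ->
  w \in S -> c w != 0.
Proof.
move=> [_ minS] nzc rel wS; apply/eqP => cw0.
exact: minS _ (properD1 wS) (lin_dep_setD1 wS cw0 nzc rel).
Qed.

Lemma circuit_rel_unique S c c' : is_circuit V S ->
  (exists2 u, u \in S & c u != 0) ->
  \sum_(u in S) c u *: V u = 0 -> \sum_(u in S) c' u *: V u = 0 ->
  exists l, forall w, w \in S -> c' w = l * c w.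
Proof.
move=> [_ minS] [w0 w0S cw0] rel rel'; set l := c' w0 / c w0.
exists l => w wS; have [// | ne] := eqVneq (c' w) (l * c w); exfalso.
apply: (minS _ (properD1 w0S)).
apply: (@lin_dep_setD1 _ (fun u => c' u - l * c u)) w0S _ _ _.
- by rewrite /l divfK // subrr.
- by exists w; rewrite // subr_eq0.
under eq_bigr do rewrite scalerBl -scalerA.
by rewrite sumrB -scaler_sumr rel rel' scaler0 subrr.
Qed.

Lemma circuit_free2 S p q : is_circuit V S -> (2 < #|S|)%N ->
  p \in S -> q \in S -> p != q -> free2 (V p) (V q).
Proof.
move=> [_ minS] S3 pS qS pq a b rel.
have pqS : [set p; q] \proper S.
  rewrite properEcard cards2 pq S3 andbT.
  by apply/subsetP => x; rewrite !inE => /orP[] /eqP ->.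
suff : ~~ ((a != 0) || (b != 0)) by rewrite negb_or !negbK => /andP[/eqP -> /eqP ->].
apply/negP => ab; apply: (minS _ pqS).
have qp : q != p by rewrite eq_sym.
exists (fun w => if w == p then a else b); split; last first.
  by rewrite big_set2 // eqxx (negbTE qp).
by case/orP: ab => [a0 | b0]; [exists p | exists q]; rewrite ?inE ?eqxx ?orbT ?(negbTE qp).
Qed.

Lemma lin_dep3_circuit S : #|S| = 3%N ->
  (forall p q, p \in S -> q \in S -> p != q -> free2 (V p) (V q)) ->
  lin_dep V S -> is_circuit V S.
Proof.
move=> S3 freeS depS; split=> // S' /properP [S'S [t tS tS']] depS'.
move: S3; rewrite (cardsD1 t) tS => -[] /eqP /cards2P [p [q [pq Stpq]]].
have /setD1P [_ pS] : p \in S :\ t by rewrite Stpq !inE eqxx.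
have /setD1P [_ qS] : q \in S :\ t by rewrite Stpq !inE eqxx orbT.
apply: (free2_not_lin_dep pq (freeS p q pS qS pq)); rewrite -Stpq.
apply: lin_dep_subset depS'; apply/subsetP => x xS'.
by rewrite !inE (subsetP S'S _ xS') andbT; apply: contraNneq tS' => <-.
Qed.

Lemma circuit3_line S : is_circuit V S -> #|S| = 3%N ->
  exists L : 'M_d.+1, \rank L = 2%N /\ forall w, w \in S -> (V w <= L)%MS.
Proof.
move=> circS S3; have [x [y [z [xy xz yz defS]]]] := cards3_set3 S3.
have [xS yS zS] : [/\ x \in S, y \in S & z \in S] by rewrite defS !inE !eqxx ?orbT.
have fxy : free2 (V x) (V y) by apply: circuit_free2 circS _ xS yS xy; rewrite S3.
have [[c [nzc rel]] _] := circS.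
have cz := circuit_coef_neq0 circS nzc rel zS.
exists (V x + V y)%MS; split; first exact: rank_adds_free2.
move=> w; rewrite defS !inE => /orP[/orP[]|] /eqP ->; [exact: addsmxSl | exact: addsmxSr |].
by move: rel; rewrite defS big_set3 // => /(rel3_sub_adds cz).
Qed.

Lemma rank2_lin_dep3 (L : 'M_d.+1) x y z : \rank L = 2%N ->
  x != y -> x != z -> y != z -> free2 (V x) (V y) ->
  (forall w, w \in [set x; y; z] -> (V w <= L)%MS) -> lin_dep V [set x; y; z].
Proof.
move=> L2 xy xz yz fxy VL.
have [xS yS zS] : [/\ x \in [set x; y; z], y \in [set x; y; z] & z \in [set x; y; z]].
  by rewrite !inE !eqxx ?orbT.
have [a [b Vz]] := free2_span L2 fxy (VL x xS) (VL y yS) (VL z zS).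
exists (fun w => if w == z then -1 else if w == x then a else b); split.
  by exists z; rewrite ?inE ?eqxx ?orbT // oppr_eq0 oner_eq0.
rewrite big_set3 // (negbTE xz) (negbTE yz) [y == x]eq_sym (negbTE xy) !eqxx.
by rewrite scaleN1r Vz subrr.
Qed.

End Families.

Section Correspondence.
Variables (K : fieldType) (B W : finType) (E : B -> W -> bool) (d : nat).
Hypothesis deg3 : black_deg3 E.
Implicit Types (V : W -> 'rV[K]_d.+1) (mu : B -> W -> K).

Lemma circuit_config_TCD_map V mu :
  circuit_config E V mu -> TCD_map E (fun w => proj_pt (V w)).
Proof.
move=> [[V0 _] circ]; split=> [w | b]; first exact: proj_pt_is_proj_pt.
split=> [w1 w2 bw1 bw2 w12 | ].
  apply/(free2E (V0 w1) (V0 w2)).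
  by apply: (circuit_free2 (circ b)); rewrite ?deg3 ?inE.
have [L [L2 VL]] := circuit3_line (circ b) (deg3 b).
by exists L; split=> // w bw; rewrite /proj_pt genmxE VL ?inE.
Qed.

Lemma gauge_equiv_proj_pt V mu V' mu' :
  gauge_equiv E V mu V' mu' -> forall w, proj_pt (V w) = proj_pt (V' w).
Proof. by case=> _ [lW [_ [lW0 [V'E _]]]] w; rewrite V'E proj_pt_scale. Qed.

Lemma proj_pt_gauge_equiv V mu V' mu' : circuit_config E V mu -> VRC E V' mu' ->
  (forall w, proj_pt (V w) = proj_pt (V' w)) -> gauge_equiv E V mu V' mu'.
Proof.
move=> [[_ rel] circ] [V'0 rel'] VV'.
have [lW V'E] := fin_all_exists (fun w => proj_pt_eq_scale (esym (VV' w))).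
have lW0 w : lW w != 0 by apply: contraNneq (V'0 w) => lw0; rewrite V'E lw0 scale0r.
have lB_ex b : exists l : K, l != 0 /\
    forall w, E b w -> mu' b w = l * (lW w)^-1 * mu b w.
  have [[w0 bw0 m0] rel_b] := rel b; have [[w1 bw1 m1] rel'_b] := rel' b.
  have [l lE] : exists l, forall w, w \in nbhd E b -> mu' b w * lW w = l * mu b w.
    apply: (circuit_rel_unique (circ b) _ rel_b); first by exists w0; rewrite ?inE.
    by rewrite -[RHS]rel'_b; apply: eq_bigr => w _; rewrite V'E scalerA.
  exists l; split=> [|w bw]; last by rewrite mulrAC -lE ?inE // mulfK.
  apply: contraNneq m1 => l0; have := lE w1; rewrite inE l0 mul0r => /(_ bw1) /eqP.
  by rewrite mulf_eq0 (negbTE (lW0 w1)) orbF.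
have [lB lBE] := fin_all_exists lB_ex.
exists lB, lW; split=> [b | ]; first by case: (lBE b).
by do 2!split=> //; move=> b; apply: (lBE b).2.
Qed.

Lemma TCD_map_lift T : TCD_map E T ->
  exists V mu, circuit_config E V mu /\ forall w, proj_pt (V w) = T w.
Proof.
move=> [Tpt Tb]; pose V w := nz_row (T w).
have [V0 VT] : (forall w, V w != 0) /\ (forall w, proj_pt (V w) = T w).
  by split=> w; have [] := is_proj_pt_nz_row (Tpt w).
have Vfree b p q : E b p -> E b q -> p != q -> free2 (V p) (V q).
  by move=> bp bq pq; apply/free2E; rewrite ?V0 ?VT //; apply: (Tb b).1.
have Vdep b : lin_dep V (nbhd E b).
  have [x [y [z [xy xz yz defN]]]] := cards3_set3 (deg3 b).
  have inN w : w \in [set x; y; z] -> E b w by rewrite -defN inE.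
  have [L [L2 TL]] := (Tb b).2.
  rewrite /nbhd defN; apply: (rank2_lin_dep3 L2) => // [|w /inN bw].
    by apply: (Vfree b); rewrite ?inN // !inE eqxx ?orbT.
  by rewrite -genmxE -/(proj_pt _) VT TL.
have [mu muE] := fin_all_exists Vdep.
exists V, mu; split=> //; split.
  split=> // b; have [[w wN cw] rel] := muE b.
  by split=> //; exists w; rewrite // -inE.
move=> b; apply: lin_dep3_circuit (deg3 b) _ (Vdep b) => p q; rewrite !inE; exact: Vfree.
Qed.

End Correspondence.

Theorem proposition3p3 (R : realType) (B W : finType) (E : B -> W -> bool)
    (d : nat) (hd : (1 <= d)%N) (hdeg : black_deg3 E) :
  [/\ (* the induced map is a TCD map *)
      forall (V : W -> 'rV[R[i]]_(d.+1)) (mu : B -> W -> R[i]),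
        circuit_config E V mu -> TCD_map E (fun w => proj_pt (V w)),
      (* it is well defined and injective on gauge classes *)
      forall (V V' : W -> 'rV[R[i]]_(d.+1)) (mu mu' : B -> W -> R[i]),
        circuit_config E V mu -> circuit_config E V' mu' ->
        (gauge_equiv E V mu V' mu' <-> (forall w, proj_pt (V w) = proj_pt (V' w)))
    & (* and surjective onto TCD maps *)
      forall T : W -> 'M[R[i]]_(d.+1), TCD_map E T ->
        exists (V : W -> 'rV[R[i]]_(d.+1)) (mu : B -> W -> R[i]),
          circuit_config E V mu /\ forall w, proj_pt (V w) = T w].
Proof.
split.
- by move=> V mu; apply: circuit_config_TCD_map.
- move=> V V' mu mu' cfg [vrc' _].
  by split; [exact: gauge_equiv_proj_pt | exact: proj_pt_gauge_equiv].
- by move=> T; apply: TCD_map_lift.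
Qed.
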